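(* Let $(S,|\cdot|)$ be a finite metric space with $n$ points, $t\ge1$, $G'=(S,E')$ a $t$-spanner for $S$, $f$ an integer with $1\le f\le (n-1)/2$, and $G=(S,E)$ the graph obtained from $G'$ by the construction in the context. Let $F\subseteq E$ be such that $(S,F)$ has maximum degree at most $f$. Then for every edge $\{a,b\}\in E'$ there exists a shortest path between $a$ and $b$ in the graph $G\setminus F$ all of whose vertices belong to $C_{ab}\cup\{a,b\}$.
   Context: All graphs on $S$ have edge weights $|pq|$; path lengths are sums of edge weights. A graph $G'=(S,E')$ is a $t$-spanner for $S$ if its shortest-path distance satisfies $\delta_{G'}(p,q)\le t|pq|$ for all $p,q$. $G\setminus F$ is the graph with vertex set $S$ and edge set $E\setminus F$. Construction: for each edge $\{a,b\}\in E'$, list the points of $S\setminus\{a,b\}$ as $c_1,\dots,c_{n-2}$ in non-decreasing order of $|ac_i|+|c_ib|$ (ties broken arbitrarily) and let $C_{ab}=\{c_1,\dots,c_{2f-1}\}$. The graph $G=(S,E)$ has edge set $E=E'\cup\{\{a,c\},\{c,b\}:\{a,b\}\in E',\ c\in C_{ab}\}$. *)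

From mathcomp Require Import all_boot all_order all_algebra.
Set Implicit Arguments. Unset Strict Implicit. Unset Printing Implicit Defensive.
Import Order.TTheory GRing.Theory Num.Theory.
Local Open Scope ring_scope.

Section Defs.
Variables (R : realFieldType) (T : finType).

Definition is_metric (d : T -> T -> R) : Prop :=
  [/\ forall x y, 0 <= d x y,
      forall x y, d x y = 0 <-> x = y,
      forall x y, d x y = d y x &
      forall x y z, d x z <= d x y + d y z].

Definition is_graph (Ed : {set {set T}}) : Prop :=
  forall e, e \in Ed -> #|e| = 2%N.

Definition is_path (Ed : {set {set T}}) (x y : T) (s : seq T) : bool :=
  [&& path (fun u v => [set u; v] \in Ed) x s, last x s == y & uniq (x :: s)].

Definition path_len (d : T -> T -> R) (x : T) (s : seq T) : R :=
  \sum_(uv <- zip (x :: s) s) d uv.1 uv.2.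

Definition is_spanner (d : T -> T -> R) (t : R) (Ed : {set {set T}}) : Prop :=
  forall p q, exists s, is_path Ed p q s /\ path_len d p s <= t * d p q.

(* C is a valid choice of the sets C_ab of the construction: for each edge
   {a,b} of E', the points of S \ {a,b} are listed in non-decreasing order of
   |ac|+|cb| (ties broken arbitrarily) and C_ab consists of the first 2f-1. *)
Definition valid_C (d : T -> T -> R) (f : nat) (E' : {set {set T}})
    (C : {set T} -> {set T}) : Prop :=
  forall a b, [set a; b] \in E' ->
    exists s : seq T,
      [/\ perm_eq s (enum (~: [set a; b])),
          sorted (fun x y => d a x + d x b <= d a y + d y b) s &
          C [set a; b] = [set x in take (2 * f - 1) s]].

Definition construct_E (E' : {set {set T}}) (C : {set T} -> {set T}) :
    {set {set T}} :=
  E' :|: [set e | [exists a, exists b, exists c,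
            [&& [set a; b] \in E', c \in C [set a; b] &
                (e == [set a; c]) || (e == [set c; b])]]].

Definition max_deg_le (F : {set {set T}}) (f : nat) : Prop :=
  forall v, (#|[set e in F | v \in e]| <= f)%N.

End Defs.

(* If {a,b} survives in G \ F it is itself a shortest a-b path.  Otherwise
   {a,b} is one of the at most f edges of F at a (and at b), so among the
   2f-1 points of C_ab at most (f-1) + (f-1) are cut off from a or from b, and
   some c in C_ab gives the path a c b in G \ F.  Any a-b path visiting a point
   v outside C_ab u {a,b} has length at least |av| + |vb| >= |ac| + |cb|, by
   the choice of C_ab.  Hence a shortest path among those staying inside
   C_ab u {a,b} (finitely many simple paths) is shortest overall. *)
From mathcomp Require Import all_boot all_order all_algebra.
From mathcomp Require Import zify.
Set Implicit Arguments. Unset Strict Implicit. Unset Printing Implicit Defensive.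
Import Order.TTheory GRing.Theory Num.Theory.
Local Open Scope ring_scope.

Section PathLength.
Variables (R : realFieldType) (T : finType) (d : T -> T -> R).

Lemma path_len_nil x : path_len d x [::] = 0.
Proof. by rewrite /path_len big_nil. Qed.

Lemma path_len_cons x y s : path_len d x (y :: s) = d x y + path_len d y s.
Proof. by rewrite /path_len /= big_cons. Qed.

Hypothesis metric_d : is_metric d.

Lemma path_len_ge_dist x s : d x (last x s) <= path_len d x s.
Proof.
have [_ d_eq0 _ d_tri] := metric_d.
elim: s x => [|y s IHs] x /=; first by rewrite path_len_nil (proj2 (d_eq0 x x)).
by rewrite path_len_cons (le_trans (d_tri x y _)) // lerD2l.
Qed.

Lemma path_len_ge_detour x s v :
  v \in s -> d x v + d v (last x s) <= path_len d x s.
Proof.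
have [_ _ _ d_tri] := metric_d.
elim: s x => [|y s IHs] x //=; rewrite in_cons path_len_cons.
case/predU1P => [->|v_s]; first by rewrite lerD2l path_len_ge_dist.
apply: le_trans (_ : d x y + (d y v + d v (last y s)) <= _); last first.
  by rewrite lerD2l IHs.
by rewrite addrA lerD2r d_tri.
Qed.

Variable Ed : {set {set T}}.

Lemma size_path_le_card x y s : is_path Ed x y s -> (size s <= #|T|)%N.
Proof.
case/and3P=> _ _ uniq_s; rewrite cardE (leq_trans (leqnSn _)) //.
by apply: uniq_leq_size uniq_s _ => v _; rewrite mem_enum.
Qed.

(* Simple paths are searched in the finite type #|T|.-bseq T. *)
Lemma exists_shortest_path (P : pred (seq T)) x y s0 :
  is_path Ed x y s0 -> P s0 ->
  exists s, [/\ is_path Ed x y s, P s &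
    forall s', is_path Ed x y s' -> P s' -> path_len d x s <= path_len d x s'].
Proof.
move=> s0_path P_s0.
pose Q (bs : #|T|.-bseq T) := is_path Ed x y bs && P bs.
have Q_s0 : Q (Bseq (size_path_le_card s0_path)) by apply/andP.
case: (arg_minP (fun bs : #|T|.-bseq T => path_len d x bs) Q_s0).
move=> s /andP[s_path P_s] s_min; exists s; split=> // s' s'_path P_s'.
by apply: (s_min (Bseq (size_path_le_card s'_path))); apply/andP.
Qed.

Lemma exists_shortest_path_within (A : {set T}) x y p :
  is_path Ed x y p -> all (fun v => v \in A) (x :: p) ->
  (forall s, is_path Ed x y s -> ~~ all (fun v => v \in A) (x :: s) ->
     path_len d x p <= path_len d x s) ->
  exists s, [/\ is_path Ed x y s,
    (forall s', is_path Ed x y s' -> path_len d x s <= path_len d x s') &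
    all (fun v => v \in A) (x :: s)].
Proof.
move=> p_path p_in p_short.
have [s [s_path s_in s_min]] :=
  exists_shortest_path (P := fun s => all (fun v => v \in A) (x :: s))
    p_path p_in.
exists s; split=> // s' s'_path.
have [s'_in|s'_out] := boolP (all (fun v => v \in A) (x :: s')).
  exact: s_min.
exact: le_trans (s_min p p_path p_in) (p_short s' s'_path s'_out).
Qed.

End PathLength.

Lemma sorted_take_drop (X : eqType) (r : rel X) (s : seq X) k x y :
  transitive r -> sorted r s -> x \in take k s -> y \in drop k s -> r x y.
Proof.
move=> r_trans; rewrite (sorted_pairwise r_trans).
rewrite -[s in pairwise _ s](cat_take_drop k) pairwise_cat.
by case/and3P=> /allrelP r_take_drop _ _; apply: r_take_drop.
Qed.

Lemma set2_inj (T : finType) (x : T) : injective (fun y => [set x; y]).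
Proof.
move=> y z eq_xy_xz.
have : z \in [set x; y] by rewrite eq_xy_xz !inE eqxx orbT.
have : y \in [set x; z] by rewrite -eq_xy_xz !inE eqxx orbT.
by rewrite !inE => /orP[/eqP->|/eqP->//] /orP[/eqP->|/eqP->].
Qed.

Lemma max_deg_other_neighbours (T : finType) (F : {set {set T}}) f x y :
  max_deg_le F f -> [set x; y] \in F -> x != y ->
  (#|[set z | ([set x; z] \in F) && (z != y)]| < f)%N.
Proof.
move=> deg_F xy_F neq_xy.
set N := [set z | _]; set Fx := [set e in F | x \in e].
have xy_Fx : [set x; y] \in Fx by rewrite inE xy_F !inE eqxx.
rewrite -(card_imset N (@set2_inj T x)) (leq_trans _ (deg_F x)) //.
rewrite (cardsD1 [set x; y] Fx) xy_Fx add1n ltnS subset_leq_card //.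
apply/subsetP=> e /imsetP[z]; rewrite inE => /andP[xz_F neq_zy] ->{e}.
by rewrite !inE xz_F !eqxx andbT (inj_eq (@set2_inj T x)) neq_zy.
Qed.

Section Construction.
Variables (R : realFieldType) (T : finType) (d : T -> T -> R).
Variables (E' : {set {set T}}) (f : nat) (C : {set T} -> {set T}).
Hypotheses (vC : valid_C d f E' C) (big_T : (2 * f + 1 <= #|T|)%N).
Variables (a b : T).
Hypotheses (ab_E' : [set a; b] \in E') (neq_ab : a != b).

Local Notation Cab := (C [set a; b]).

Lemma mem_C_neq c : c \in Cab -> (c != a) && (c != b).
Proof.
have [s [perm_s _ ->]] := vC ab_E'.
by rewrite inE => /mem_take; rewrite (perm_mem perm_s) mem_enum !inE negb_or.
Qed.

Lemma card_C : #|Cab| = (2 * f - 1)%N.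
Proof.
have [s [perm_s _ ->]] := vC ab_E'.
have uniq_s : uniq s by rewrite (perm_uniq perm_s) enum_uniq.
rewrite cardsE (card_uniqP (take_uniq _ uniq_s)) size_takel //.
rewrite (perm_size perm_s) -cardE.
by move: (cardsC [set a; b]) big_T; rewrite cards2 neq_ab; lia.
Qed.

Lemma C_detour_le c v : c \in Cab -> v \notin Cab -> v != a -> v != b ->
  d a c + d c b <= d a v + d v b.
Proof.
have [s [perm_s sorted_s C_eq]] := vC ab_E'.
rewrite C_eq !inE => c_C v_notC neq_va neq_vb.
have v_drop : v \in drop (2 * f - 1) s.
  have : v \in s by rewrite (perm_mem perm_s) mem_enum !inE negb_or neq_va.
  by rewrite -[s in v \in s](cat_take_drop (2 * f - 1)) mem_cat (negbTE v_notC).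
by apply: sorted_take_drop sorted_s c_C v_drop => ? ? ?; apply: le_trans.
Qed.

Lemma construct_E_C c : c \in Cab ->
  ([set a; c] \in construct_E E' C) && ([set c; b] \in construct_E E' C).
Proof.
move=> c_C; rewrite !inE; apply/andP; split; apply/orP; right;
  by apply/existsP; exists a; apply/existsP; exists b; apply/existsP; exists c;
     rewrite ab_E' c_C !eqxx ?orbT.
Qed.

Variable F : {set {set T}}.
Hypothesis deg_F : max_deg_le F f.

Lemma exists_C_unblocked : [set a; b] \in F ->
  exists2 c, c \in Cab & ([set a; c] \notin F) && ([set c; b] \notin F).
Proof.
move=> ab_F.
have ba_F : [set b; a] \in F by rewrite setUC.
have nbr_a := max_deg_other_neighbours deg_F ab_F neq_ab.
have neq_ba : b != a by rewrite eq_sym.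
have nbr_b := max_deg_other_neighbours deg_F ba_F neq_ba.
set Na := [set z | _] in nbr_a; set Nb := [set z | _] in nbr_b.
have : ~~ (Cab \subset Na :|: Nb).
  apply/negP=> /subset_leq_card; move: (leq_card_setU Na Nb).1.
  by rewrite card_C; lia.
case/subsetPn=> c c_C; rewrite !inE negb_or => /andP[].
have /andP[neq_ca neq_cb] := mem_C_neq c_C.
rewrite neq_ca neq_cb !andbT => ac_notF bc_notF.
by exists c; rewrite // ac_notF setUC.
Qed.

Hypothesis metric_d : is_metric d.

Local Notation GF := (construct_E E' C :\: F).
Local Notation inside := (fun v => v \in Cab :|: [set a; b]).

Lemma path_len_ge_detour_outside s :
  is_path GF a b s -> ~~ all inside (a :: s) ->
  exists2 v, [&& v \notin Cab, v != a & v != b] &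
    d a v + d v b <= path_len d a s.
Proof.
case/and3P=> _ /eqP last_s _ /allPn[v v_s].
rewrite !inE !negb_or => /and3P[v_notC neq_va neq_vb].
exists v; first by rewrite v_notC neq_va neq_vb.
have v_in_s : v \in s by move: v_s; rewrite inE (negbTE neq_va).
by rewrite -[in X in _ + X <= _]last_s path_len_ge_detour.
Qed.

Lemma exists_path_in_C_le_detours : exists p, [/\ is_path GF a b p,
  all inside (a :: p) &
  forall s, is_path GF a b s -> ~~ all inside (a :: s) ->
    path_len d a p <= path_len d a s].
Proof.
have [_ _ _ d_tri] := metric_d.
have [ab_F|ab_notF] := boolP ([set a; b] \in F).
  have [c c_C /andP[ac_notF cb_notF]] := exists_C_unblocked ab_F.
  have /andP[neq_ca neq_cb] := mem_C_neq c_C.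
  have /andP[ac_E cb_E] := construct_E_C c_C.
  exists [:: c; b]; split.
  - rewrite /is_path /= !in_setD ac_notF cb_notF ac_E cb_E eqxx /=.
    by rewrite !negb_or eq_sym neq_ca neq_ab neq_cb.
  - by rewrite /= !inE c_C !eqxx !orbT.
  move=> s s_path /(path_len_ge_detour_outside s_path)[v].
  case/and3P=> v_notC neq_va neq_vb; apply: le_trans.
  by rewrite !path_len_cons path_len_nil addr0 C_detour_le.
exists [:: b]; split.
- rewrite /is_path /= in_setD ab_notF /construct_E in_setU ab_E'.
  by rewrite eqxx /= inE andbT.
- by rewrite /= !inE !eqxx !orbT.
move=> s s_path /(path_len_ge_detour_outside s_path)[v _].
by rewrite path_len_cons path_len_nil addr0; apply: le_trans (d_tri a v b).
Qed.

End Construction.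

Theorem lemma4 (R : realFieldType) (T : finType) (d : T -> T -> R)
  (t : R) (E' : {set {set T}}) (f : nat) (C : {set T} -> {set T})
  (F : {set {set T}}) :
  is_metric d ->
  1 <= t ->
  is_graph E' ->
  is_spanner d t E' ->
  (1 <= f)%N -> (2 * f + 1 <= #|T|)%N ->
  valid_C d f E' C ->
  F \subset construct_E E' C ->
  max_deg_le F f ->
  forall a b, [set a; b] \in E' ->
    exists s : seq T,
      [/\ is_path (construct_E E' C :\: F) a b s,
          (forall s' : seq T, is_path (construct_E E' C :\: F) a b s' ->
             path_len d a s <= path_len d a s') &
          all (fun v => v \in C [set a; b] :|: [set a; b]) (a :: s)].
Proof.
move=> metric_d _ graph_E' _ _ big_T vC _ deg_F a b ab_E'.
have neq_ab : a != b.
  by move: (graph_E' _ ab_E'); rewrite cards2; case: (a != b).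
have [p [p_path p_in p_le]] :=
  exists_path_in_C_le_detours vC big_T ab_E' neq_ab deg_F metric_d.
exact: exists_shortest_path_within p_path p_in p_le.
Qed.
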